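(* Let $\Omega\subset\mathbb R^3$ be a bounded domain containing the origin and $k\ge0$ an integer. Then $$\mathbb P_{k+1}(\Omega; \mathbb T) = (\mathbb P_k(\Omega; \mathbb S)\times\boldsymbol x)\oplus\operatorname{dev}\operatorname{grad}\mathbb P_{k+2}(\Omega; \mathbb R^3),$$ where $\mathbb P_k(\Omega;\mathbb S)\times\boldsymbol x=\{\boldsymbol\tau\times\boldsymbol x:\boldsymbol\tau\in\mathbb P_k(\Omega;\mathbb S)\}$.
   Context: $\mathbb S,\mathbb T$: real symmetric, resp. trace-free, $3\times3$ matrices; $\mathbb P_m(\Omega;X)$: $X$-valued polynomials of total degree $\le m$. $\boldsymbol x$ is the position vector; $\boldsymbol\tau\times\boldsymbol x$ is the matrix whose $i$-th row is (row $i$ of $\boldsymbol\tau$)$\times\boldsymbol x$. $\operatorname{grad}\boldsymbol u=(\partial_ju_i)_{ij}$ and $\operatorname{dev}\boldsymbol A=\boldsymbol A-\frac13\operatorname{tr}(\boldsymbol A)\boldsymbol I$. *)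

From HB Require Import structures.
From mathcomp Require Import all_boot all_order all_algebra.
From mathcomp Require Import mpoly.
Set Implicit Arguments. Unset Strict Implicit. Unset Printing Implicit Defensive.
Import GRing.Theory.
Local Open Scope ring_scope.

(* Polynomials in the three coordinates x_0,x_1,x_2 of R^3, with coefficients
   in a real field R.  A polynomial of total degree <= d has msize <= d.+1. *)
Notation Poly3 R := {mpoly R[3]}.

Definition pdeg_le (R : realFieldType) (d : nat) (p : Poly3 R) : Prop :=
  (msize p <= d.+1)%N.

Definition mx_deg_le (R : realFieldType) (d : nat) (A : 'M[Poly3 R]_3) : Prop :=
  forall i j, pdeg_le d (A i j).

Definition vec_deg_le (R : realFieldType) (d : nat) (u : 'I_3 -> Poly3 R) : Prop :=
  forall i, pdeg_le d (u i).

Definition symmetric_mx (R : realFieldType) (A : 'M[Poly3 R]_3) : Prop := A^T = A.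
Definition tracefree_mx (R : realFieldType) (A : 'M[Poly3 R]_3) : Prop := \tr A = 0.

Definition nxt3 (j : 'I_3) : 'I_3 := Ordinal (ltn_pmod j.+1 (isT : (0 < 3)%N)).

Definition posx (R : realFieldType) (j : 'I_3) : Poly3 R := 'X_j.

(* tau \times x : row i is (row i of tau) \times x, where
   (a \times b)_j = a_{j+1} b_{j+2} - a_{j+2} b_{j+1} (indices mod 3). *)
Definition crossx (R : realFieldType) (tau : 'M[Poly3 R]_3) : 'M[Poly3 R]_3 :=
  \matrix_(i, j) (tau i (nxt3 j) * posx R (nxt3 (nxt3 j))
                  - tau i (nxt3 (nxt3 j)) * posx R (nxt3 j)).

Definition gradv (R : realFieldType) (u : 'I_3 -> Poly3 R) : 'M[Poly3 R]_3 :=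
  \matrix_(i, j) mderiv j (u i).

Definition devm (R : realFieldType) (A : 'M[Poly3 R]_3) : 'M[Poly3 R]_3 :=
  A - ((3%:R : R)^-1 *: \tr A)%:M.

From HB Require Import structures.
From mathcomp Require Import all_boot all_order all_algebra.
From mathcomp Require Import mpoly.
From mathcomp Require Import ring.
Import GRing.Theory Num.Theory.
Set Implicit Arguments. Unset Strict Implicit. Unset Printing Implicit Defensive.
Local Open Scope ring_scope.

(* The tool throughout is the Euler operator  E p = sum_i x_i d_i p,  whose
   eigenvectors for the eigenvalue d are exactly the d-homogeneous polynomials
   and which satisfies [d_i, E] = d_i.  Combined with two vector identities,
       (curl v) x x = (E + 1) v - grad (v . x)   and   (tau x x) x = 0,
   this gives the three parts of the lemma:
   - inclusion: tau x x is trace-free iff its axial vector (the skew part of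
     tau) is orthogonal to x, and dev grad is trace-free by construction;
   - trivial intersection: (dev grad u) x = E u - (div u / 3) x, so a u with
     (dev grad u) x = 0 has E div u = 0, then grad div u = 0, and finally
     E (dev grad u) = - dev grad u, forcing dev grad u = 0;
   - spanning: a trace-free A, homogeneous of degree n, is reduced by a
     dev grad u (u built from A x) to a trace-free B with B x = 0, and such a
     B equals tau x x for tau = curl(B)/(n+1) corrected to be symmetric by a
     term q x^T; a general A is the sum of its homogeneous components. *)

Section Euler.
Variables (n : nat) (R : numFieldType).
Implicit Types (p q : {mpoly R[n]}) (m : 'X_{1..n}).

Definition euler p : {mpoly R[n]} := \sum_(i < n) 'X_i * mderiv i p.

Lemma euler_is_linear : linear euler.
Proof.
move=> c p q; rewrite /euler scaler_sumr -big_split /=; apply: eq_bigr => j _.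
by rewrite mderivD mderivZ mulrDr scalerAr.
Qed.

HB.instance Definition _ :=
  GRing.isLinear.Build R {mpoly R[n]} {mpoly R[n]} _ euler euler_is_linear.

Lemma mderivXi i j : mderiv i ('X_j : {mpoly R[n]}) = (j == i)%:R.
Proof.
rewrite mderivX mnm1E; case: eqP => [->|_]; last by rewrite scale0r.
have -> : (U_(i) - U_(i) = 0 :> 'X_{1..n})%MM.
  by apply/mnmP => l; rewrite !mnmE subnn.
by rewrite mpolyX0 scale1r.
Qed.

Lemma euler_X m : euler 'X_[m] = (mdeg m)%:R *: 'X_[m].
Proof.
rewrite /euler mdegE natr_sum scaler_suml; apply: eq_bigr => j _.
rewrite mderivX -scalerAr; have [->|hj] := posnP (m j); first by rewrite !scale0r.
congr (_ *: _); rewrite -mpolyXD addmC submK //.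
by apply/mnm_lepP => i; rewrite mnm1E; case: eqP => [<-|].
Qed.

Lemma mcoeff_euler p m : (euler p)@_m = (mdeg m)%:R * p@_m.
Proof.
set d := (mdeg m)%:R. (* mdeg m is itself a sum: keep it out of raddf_sum *)
rewrite {1 2}(mpolyE p) (linear_sum euler) !raddf_sum mulr_sumr.
apply: eq_bigr => m' _; rewrite linearZ /= euler_X !mcoeffZ mcoeffX.
by case: eqP => [->|_]; rewrite ?mulr0 ?mulr1 // mulrC.
Qed.

Lemma euler_eigen_mdeg p c m : euler p = c *: p -> m \in msupp p -> (mdeg m)%:R = c.
Proof.
rewrite mcoeff_msupp => eE nz; apply/eqP; have /eqP := mcoeff_euler p m.
by rewrite eE mcoeffZ -subr_eq0 -mulrBl mulf_eq0 (negbTE nz) orbF subr_eq0 eq_sym.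
Qed.

Lemma eulerP d p : reflect (euler p = d%:R *: p) (p \is d.-homog).
Proof.
apply: (iffP (dhomogP _ _ _)) => [hd|eE m /(euler_eigen_mdeg eE)/eqP]; last first.
  by rewrite eqr_nat => /eqP.
apply/mpolyP => m; rewrite mcoeff_euler mcoeffZ.
have [/hd->//|] := boolP (m \in msupp p).
by rewrite mcoeff_msupp negbK => /eqP->; rewrite !mulr0.
Qed.

Lemma euler_eigen_eq0 p c : euler p = c *: p -> (forall d : nat, d%:R != c) -> p = 0.
Proof.
move=> eE hc; apply/mpolyP => m; rewrite mcoeff0; apply/eqP/negPn/negP.
by rewrite -mcoeff_msupp => /(euler_eigen_mdeg eE)/eqP; apply/negP.
Qed.

Lemma euler_Neg1_eq0 p : euler p = -1 *: p -> p = 0.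
Proof.
by move/euler_eigen_eq0; apply=> d; rewrite -subr_eq0 opprK natr1 pnatr_eq0.
Qed.

Lemma eulerM p q : euler (p * q) = euler p * q + p * euler q.
Proof.
rewrite /euler mulr_suml mulr_sumr -big_split /=; apply: eq_bigr => j _.
by rewrite mderivM; ring.
Qed.

Lemma mderiv_euler i p : mderiv i (euler p) = euler (mderiv i p) + mderiv i p.
Proof.
rewrite /euler raddf_sum /=.
have -> : \sum_(j < n) mderiv i ('X_j * mderiv j p) =
    \sum_(j < n) 'X_j * mderiv j (mderiv i p) + \sum_(j < n) (j == i)%:R * mderiv j p.
  rewrite -big_split /=; apply: eq_bigr => j _.
  by rewrite mderivM mderivXi mderiv_comm addrC.
congr (_ + _); rewrite (bigD1 i) //= eqxx mul1r big1 ?addr0 // => j /negbTE ->.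
by rewrite mul0r.
Qed.

Lemma mderiv_homog d i p : p \is d.+1.-homog -> mderiv i p \is d.-homog.
Proof.
move/eulerP => eE; apply/eulerP; have := mderiv_euler i p.
by rewrite eE mderivZ -natr1 scalerDl scale1r => /addIr.
Qed.

Lemma mderiv_homog0 i p : p \is 0.-homog -> mderiv i p = 0.
Proof.
move/eulerP; rewrite scale0r => eE; apply: euler_Neg1_eq0.
have := mderiv_euler i p; rewrite eE raddf0 scaleN1r => /eqP.
by rewrite eq_sym addr_eq0 => /eqP.
Qed.

Lemma mulX_homog d j p : p \is d.-homog -> p * 'X_j \is d.+1.-homog.
Proof. by move=> hp; rewrite -addn1 dhomogM // dhomogX; apply/eqP/mdeg1. Qed.

Lemma mulX_mderiv_homog d i j p : p \is d.-homog -> mderiv i p * 'X_j \is d.-homog.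
Proof.
move/eulerP => eE; apply/eulerP.
by rewrite eulerM euler_X mdeg1 scale1r -mulrDl -mderiv_euler eE mderivZ scalerAl.
Qed.

Lemma msize_homog d p : p \is d.-homog -> (msize p <= d.+1)%N.
Proof.
by move/dhomogP => hd; rewrite msizeE; apply/bigmax_leqP_seq => m /hd ->.
Qed.

End Euler.

Definition i0 : 'I_3 := @Ordinal 3 0 isT.
Definition i1 : 'I_3 := @Ordinal 3 1 isT.
Definition i2 : 'I_3 := @Ordinal 3 2 isT.

Lemma ord3P (j : 'I_3) : [\/ j = i0, j = i1 | j = i2].
Proof.
case: j => [[|[|[|//]]]] Hj; [constructor 1|constructor 2|constructor 3];
  exact/val_inj.
Qed.

Lemma nxt30 : nxt3 i0 = i1. Proof. exact/val_inj. Qed.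
Lemma nxt31 : nxt3 i1 = i2. Proof. exact/val_inj. Qed.
Lemma nxt32 : nxt3 i2 = i0. Proof. exact/val_inj. Qed.
Definition nxt3E := (nxt30, nxt31, nxt32).

Lemma sum3 (V : nmodType) (F : 'I_3 -> V) : \sum_(j < 3) F j = F i0 + F i1 + F i2.
Proof.
rewrite !big_ord_recl big_ord0 addr0 addrA; congr (F _ + F _ + F _); exact/val_inj.
Qed.

Section VectorCalculus.
Variable R : realFieldType.
Local Notation P := {mpoly R[3]}.
Local Notation x := (posx R).
Implicit Types (v w : 'I_3 -> P) (T : 'M[P]_3).

Definition dotv v w : P := \sum_l v l * w l.

Definition crossv v w (l : 'I_3) : P :=
  v (nxt3 l) * w (nxt3 (nxt3 l)) - v (nxt3 (nxt3 l)) * w (nxt3 l).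

Definition curl v (l : 'I_3) : P :=
  mderiv (nxt3 l) (v (nxt3 (nxt3 l))) - mderiv (nxt3 (nxt3 l)) (v (nxt3 l)).

Definition div v : P := \sum_i mderiv i (v i).

Definition axial T (l : 'I_3) : P :=
  T (nxt3 l) (nxt3 (nxt3 l)) - T (nxt3 (nxt3 l)) (nxt3 l).

Lemma crossxE T i j : crossx T i j = crossv (T i) x j.
Proof. by rewrite mxE. Qed.

Lemma crossv_curl_x v l :
  crossv (curl v) x l = euler (v l) + v l - mderiv l (dotv v x).
Proof.
rewrite /crossv /curl /euler /dotv /posx !sum3.
case: (ord3P l) => ->; rewrite ?nxt3E;
  rewrite !raddfD /= !mderivM !mderivXi /=; ring.
Qed.

Lemma dotv_crossv_x v : dotv (crossv v x) x = 0.
Proof. by rewrite /dotv /crossv /posx sum3 /= ?nxt3E; ring. Qed.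

Lemma crossx_dotv_x T i : dotv (crossx T i) x = 0.
Proof.
by rewrite -[RHS](dotv_crossv_x (T i)); apply: eq_bigr => j _; rewrite crossxE.
Qed.

Lemma crossvZl (c : R) v w l : crossv (fun i => c *: v i) w l = c *: crossv v w l.
Proof. by rewrite /crossv -!scalerAl scalerBr. Qed.

Lemma axial_sym T : symmetric_mx T -> axial T =1 (fun=> 0).
Proof. by move=> sT l; rewrite /axial -{1}sT mxE subrr. Qed.

Lemma axial0_sym T : axial T =1 (fun=> 0) -> symmetric_mx T.
Proof.
move=> a0; have e l : T (nxt3 l) (nxt3 (nxt3 l)) = T (nxt3 (nxt3 l)) (nxt3 l).
  by apply/eqP; rewrite -subr_eq0; apply/eqP; apply: a0.
have := e i0; have := e i1; have := e i2; rewrite ?nxt3E => e01 e20 e12.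
apply/matrixP => i j; rewrite mxE.
by case: (ord3P i) => ->; case: (ord3P j) => ->; rewrite ?e01 ?e20 ?e12.
Qed.

Lemma tr_crossx T : \tr (crossx T) = dotv (axial T) x.
Proof. by rewrite /mxtrace /dotv /axial !sum3 !mxE /posx ?nxt3E; ring. Qed.

(* the matrices q x^T are annihilated by  . x x,  and the axial vector of
   q x^T is q x x: they are the correction used to symmetrize a preimage *)
Lemma crossx_xrow (q : 'I_3 -> P) : crossx (\matrix_(i, j) (q i * x j)) = 0.
Proof. by apply/matrixP => i j; rewrite !mxE /posx; ring. Qed.

Lemma axial_xrow (q : 'I_3 -> P) l : axial (\matrix_(i, j) (q i * x j)) l = crossv q x l.
Proof. by rewrite /axial /crossv !mxE. Qed.

Lemma axialD T T' l : axial (T + T') l = axial T l + axial T' l.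
Proof. by rewrite /axial !mxE addrACA opprD. Qed.

Lemma crossxD T T' : crossx (T + T') = crossx T + crossx T'.
Proof. by apply/matrixP => i j; rewrite !mxE; ring. Qed.

Lemma tr_gradv (u : 'I_3 -> P) : \tr (gradv u) = div u.
Proof. by apply: eq_bigr => i _; rewrite mxE. Qed.

Lemma gradvD (u v : 'I_3 -> P) : gradv (fun i => u i + v i) = gradv u + gradv v.
Proof. by apply/matrixP => i j; rewrite !mxE mderivD. Qed.

Lemma devmD T T' : devm (T + T') = devm T + devm T'.
Proof. by rewrite /devm mxtraceD scalerDr raddfD /= opprD addrACA. Qed.

Lemma devmE T i j : devm T i j = T i j - (3%:R^-1 *: \tr T) *+ (i == j).
Proof. by rewrite !mxE. Qed.

Lemma tr_devm T : \tr (devm T) = 0.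
Proof.
rewrite /devm raddfB /= mxtrace_scalar -scaler_nat scalerA mulfV ?pnatr_eq0 //.
by rewrite scale1r subrr.
Qed.

Lemma devgrad_dotv_x (u : 'I_3 -> P) i :
  dotv (devm (gradv u) i) x = euler (u i) - (3%:R^-1 *: div u) * x i.
Proof.
rewrite -tr_gradv /dotv /euler /posx !sum3 !devmE !mxE.
by case: (ord3P i) => -> /=; ring.
Qed.

Lemma div_euler (u : 'I_3 -> P) : div (fun i => euler (u i)) = euler (div u) + div u.
Proof.
by rewrite /div linear_sum -big_split; apply: eq_bigr => i _; apply: mderiv_euler.
Qed.

Lemma div_mulx (f : P) : div (fun i => f * x i) = euler f + 3%:R *: f.
Proof. by rewrite /div /euler /posx !sum3 !mderivM !mderivXi /= scaler_nat; ring. Qed.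

Lemma div_dotv_x T :
  div (fun i => dotv (T i) x) = dotv (fun j => div (fun i => T i j)) x + \tr T.
Proof.
rewrite /div /dotv /mxtrace /posx [LHS]sum3 !raddf_sum /= [in RHS]sum3 !sum3.
by rewrite !mderivM !mderivXi /=; ring.
Qed.

End VectorCalculus.

Section DegreeBounds.
Variable R : realFieldType.
Local Notation P := {mpoly R[3]}.
Implicit Types p q : P.

Lemma pdeg_leD d p q : pdeg_le d p -> pdeg_le d q -> pdeg_le d (p + q).
Proof. by move=> hp hq; apply: leq_trans (mmeasureD_le _ _ _) _; rewrite geq_max hp. Qed.

Lemma pdeg_leN d p : pdeg_le d p -> pdeg_le d (- p).
Proof. by rewrite /pdeg_le mmeasureN. Qed.

Lemma pdeg_leZ d c p : pdeg_le d p -> pdeg_le d (c *: p).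
Proof. exact/leq_trans/msizeZ_le. Qed.

Lemma pdeg_le_sum d (I : finType) (F : I -> P) :
  (forall i, pdeg_le d (F i)) -> pdeg_le d (\sum_i F i).
Proof.
move=> hF; apply: (big_ind (pdeg_le d)) => //; last exact: pdeg_leD.
by rewrite /pdeg_le msize0.
Qed.

Lemma pdeg_le_mulX d p j : pdeg_le d p -> pdeg_le d.+1 (p * 'X_j).
Proof.
have [->|nz] := eqVneq p 0; first by rewrite mul0r /pdeg_le msize0.
rewrite /pdeg_le msizeM // ?msizeX ?mdeg1 ?addn2 //.
by rewrite -(mmeasure_poly_eq0 mdeg) msizeX.
Qed.

Lemma pdeg_le_mderiv d i p : pdeg_le d.+1 p -> pdeg_le d (mderiv i p).
Proof.
move=> hp; rewrite /pdeg_le msizeE; apply/bigmax_leqP_seq => m hm _.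
have : (m + U_(i))%MM \in msupp p.
  move: hm; rewrite !mcoeff_msupp mcoeff_mderiv; apply: contraNneq => ->.
  by rewrite mul0rn.
by move/msize_mdeg_lt; rewrite mdegD mdeg1 addn1 => /leq_trans/(_ hp).
Qed.

End DegreeBounds.

Section Decomposition.
Variable R : realFieldType.
Local Notation P := {mpoly R[3]}.
Local Notation x := (posx R).

Lemma crossx_tracefree k (tau : 'M[P]_3) : symmetric_mx tau -> mx_deg_le k tau ->
  tracefree_mx (crossx tau) /\ mx_deg_le k.+1 (crossx tau).
Proof.
move=> sT dT; split.
  by rewrite /tracefree_mx tr_crossx /dotv big1 // => l _; rewrite axial_sym ?mul0r.
by move=> i j; rewrite crossxE; apply: pdeg_leD; [|apply: pdeg_leN]; apply: pdeg_le_mulX.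
Qed.

Lemma devgrad_tracefree k (u : 'I_3 -> P) : vec_deg_le k.+2 u ->
  tracefree_mx (devm (gradv u)) /\ mx_deg_le k.+1 (devm (gradv u)).
Proof.
move=> du; have dgrad i j : pdeg_le k.+1 (mderiv j (u i)) by apply: pdeg_le_mderiv.
split=> [|i j]; first exact: tr_devm.
rewrite devmE mxE; apply/pdeg_leD/pdeg_leN => //.
case: (i == j); last by rewrite mulr0n /pdeg_le msize0.
by rewrite mulr1n tr_gradv; apply/pdeg_leZ/pdeg_le_sum.
Qed.

Lemma devgrad_eq0 (u : 'I_3 -> P) :
  (forall i, dotv (devm (gradv u) i) x = 0) -> devm (gradv u) = 0.
Proof.
move=> hx; set D := div u; set c : R := 3%:R^-1.
have eu i : euler (u i) = (c *: D) * x i.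
  by apply/eqP; rewrite -subr_eq0 -devgrad_dotv_x hx.
have div_eu : div (fun i => euler (u i)) = div (fun i => (c *: D) * x i).
  by apply: eq_bigr => i _; rewrite eu.
have c3 : 3%:R * c = 1 by rewrite mulfV ?pnatr_eq0.
(* div of  E u = (D/3) x  reads  (E + 1) D = (E + 3) D / 3 *)
have eD : euler D = 0.
  move: div_eu; rewrite div_euler div_mulx linearZ /= scalerA c3 scale1r -/D.
  move=> /addIr/eqP; rewrite -{1}[euler D]scale1r -subr_eq0 -scalerBl scaler_eq0.
  case/orP=> /eqP // c1; have c_1 : c = 1 by apply/eqP; rewrite eq_sym -subr_eq0 c1.
  by move: c3; rewrite c_1 mulr1 => /eqP; rewrite pnatr_eq1.
have dD j : mderiv j D = 0.
  apply: euler_Neg1_eq0; have := mderiv_euler j D; rewrite eD raddf0 scaleN1r.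
  by move/eqP; rewrite eq_sym addr_eq0 => /eqP.
(* d_j of  E u_i = (D/3) x_i  shows E (dev grad u) = - dev grad u *)
apply/matrixP => i j; rewrite devmE tr_gradv -/D !mxE; apply: euler_Neg1_eq0.
have := congr1 (mderiv j) (eu i); rewrite mderiv_euler mderivM mderivZ dD.
rewrite scaler0 mul0r add0r mderivXi /posx => h.
rewrite raddfB raddfMn /= linearZ /= eD scaler0 mul0rn subr0 scaleN1r opprB.
by rewrite -(addrK (mderiv j (u i)) (euler _)) h mulr_natr.
Qed.

(* A trace-free, n-homogeneous B with B x = 0 is tau x x for a symmetric tau,
   homogeneous of degree n - 1: take T0 = curl(B)/(n+1) row-wise, then add
   q x^T with q = - curl(axial T0)/n to cancel the skew part of T0. *)
Lemma crossx_onto_homog n (B : 'M[P]_3) :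
  \tr B = 0 -> (forall i, dotv (B i) x = 0) -> (forall i j, B i j \is n.-homog) ->
  exists tau : 'M[P]_3,
    [/\ symmetric_mx tau, forall i j, tau i j \is n.-1.-homog & crossx tau = B].
Proof.
move=> trB Bx hB.
pose T0 := \matrix_(i, j) ((n.+1%:R)^-1 *: curl (B i) j).
have crossx_T0 : crossx T0 = B.
  apply/matrixP => i j; transitivity ((n.+1%:R)^-1 *: crossv (curl (B i)) x j).
    by rewrite !mxE -!scalerAl -scalerBr.
  have /eulerP eB := hB i j.
  rewrite crossv_curl_x Bx raddf0 subr0 eB -{2}[B i j]scale1r -scalerDl natr1.
  by rewrite scalerA mulVf ?pnatr_eq0 // scale1r.
case: n => [|n] in hB T0 crossx_T0 *.
  have T0_0 : T0 = 0.
    by apply/matrixP => i j; rewrite !mxE /curl !mderiv_homog0 ?subrr ?scaler0.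
  exists 0; split=> [|i j|]; last by rewrite -T0_0.
    by rewrite /symmetric_mx trmx0.
  by rewrite mxE rpred0.
have T0_homog i j : T0 i j \is n.-homog by rewrite mxE rpredZ // rpredB ?mderiv_homog.
pose s := axial T0.
have s_homog l : s l \is n.-homog by rewrite rpredB.
have sx : dotv s x = 0 by rewrite -tr_crossx crossx_T0.
pose q l := - (n.+1%:R)^-1 *: curl s l.
exists (T0 + \matrix_(i, j) (q i * x j)); split.
- apply: axial0_sym => l; rewrite axialD axial_xrow crossvZl crossv_curl_x sx raddf0.
  have /eulerP -> := s_homog l.
  rewrite subr0 -{2}[s l]scale1r -scalerDl natr1 scalerA mulNr mulVf ?pnatr_eq0 //.
  by rewrite scaleN1r subrr.
- move=> i j; rewrite [_ i j]mxE; apply: rpredD; first exact: T0_homog.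
  rewrite mxE /q -scalerAl rpredZ // mulrBl.
  by rewrite rpredB // /posx mulX_mderiv_homog.
- by rewrite crossxD crossx_xrow addr0.
Qed.

(* A trace-free, n-homogeneous A is tau x x + dev grad u with u homogeneous
   of degree n + 1: with w = A x and D = 3 div w / (2n), the choice
   u = (w + D x / 3)/(n+1) gives E u = w + D x / 3 and div u = D, so that
   B = A - dev grad u is trace-free, n-homogeneous and satisfies B x = 0. *)
Lemma decompose_homog n (A : 'M[P]_3) :
  \tr A = 0 -> (forall i j, A i j \is n.-homog) ->
  exists tau : 'M[P]_3, exists u : 'I_3 -> P,
    [/\ symmetric_mx tau, (forall i j, tau i j \is n.-1.-homog),
        (forall i, u i \is n.+1.-homog) & A = crossx tau + devm (gradv u)].
Proof.
move=> trA hA.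
pose w i := dotv (A i) x.
have w_homog i : w i \is n.+1.-homog.
  by apply: rpred_sum => j _; apply: mulX_homog.
pose dw := div w.
have dw_homog : dw \is n.-homog by apply: rpred_sum => i _; apply: mderiv_homog.
pose D := (3%:R / (2 * n)%:R) *: dw.
have D_homog : D \is n.-homog by rewrite rpredZ.
(* for n = 0, A is constant and div w = tr A = 0 *)
have dwE : dw = ((2 * n)%:R / 3%:R) *: D.
  case: n => [|n] in hA w w_homog dw dw_homog D D_homog *.
    rewrite mul0r scale0r /dw div_dotv_x trA addr0 /dotv big1 // => j _.
    by rewrite /div big1 ?mul0r // => i _; apply: mderiv_homog0.
  by rewrite /D scalerA mulrA divfK ?pnatr_eq0 // mulfV ?scale1r // pnatr_eq0 muln_eq0.
clearbody D.
pose u i := (n.+1%:R)^-1 *: (w i + 3%:R^-1 *: (D * x i)).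
have Dx_homog i : D * x i \is n.+1.-homog by apply: mulX_homog.
have u_homog i : u i \is n.+1.-homog.
  by rewrite /u rpredZ // rpredD //; apply/rpredZ/Dx_homog.
have euler_u i : euler (u i) = w i + 3%:R^-1 *: (D * x i).
  by have /eulerP -> := u_homog i; rewrite scalerA mulfV ?pnatr_eq0 ?scale1r.
have div_u : div u = D.
  have -> : div u = (n.+1%:R)^-1 *: (dw + 3%:R^-1 *: div (fun i => D * x i)).
    rewrite /div scalerDr !scaler_sumr -big_split /=; apply: eq_bigr => i _.
    by rewrite mderivZ mderivD mderivZ scalerDr.
  rewrite div_mulx; have /eulerP -> := D_homog.
  rewrite dwE -scalerDl !scalerA -scalerDl scalerA -[RHS]scale1r; congr (_ *: _).
  by rewrite natrM -natr1; field; rewrite natr1 pnatr_eq0.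
pose B := A - devm (gradv u).
have trB : \tr B = 0 by rewrite raddfB /= trA tr_devm subrr.
have Bx i : dotv (B i) x = 0.
  rewrite /dotv (eq_bigr (fun j => A i j * x j - devm (gradv u) i j * x j)).
    rewrite sumrB -/(dotv (A i) x) -/(dotv (devm (gradv u) i) x).
    by rewrite devgrad_dotv_x euler_u div_u -scalerAl addrK subrr.
  by move=> j _; rewrite !mxE mulrBl.
have B_homog i j : B i j \is n.-homog.
  rewrite !mxE rpredB // ?hA // rpredB ?mderiv_homog // rpredMn // rpredZ //.
  by rewrite tr_gradv div_u.
have [tau [tau_sym tau_homog crossx_tau]] := crossx_onto_homog trB Bx B_homog.
by exists tau, u; split; rewrite // crossx_tau subrK.
Qed.

Definition decomposable k (A : 'M[P]_3) : Prop :=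
  exists tau : 'M[P]_3, exists u : 'I_3 -> P,
    [/\ symmetric_mx tau, mx_deg_le k tau, vec_deg_le k.+2 u &
        A = crossx tau + devm (gradv u)].

Lemma decomposable_homog k n (A : 'M[P]_3) : (n <= k.+1)%N ->
  \tr A = 0 -> (forall i j, A i j \is n.-homog) -> decomposable k A.
Proof.
move=> nk trA hA.
have [tau [u [tau_sym tau_homog u_homog ->]]] := decompose_homog trA hA.
exists tau, u; split=> // [i j|i]; apply: leq_trans (msize_homog _) _.
- exact: tau_homog.
- by rewrite ltnS -subn1 leq_subLR add1n.
- exact: u_homog.
- by rewrite !ltnS.
Qed.

Lemma decomposableD k (A A' : 'M[P]_3) :
  decomposable k A -> decomposable k A' -> decomposable k (A + A').
Proof.
move=> [t [u [ts td ud ->]]] [t' [u' [ts' td' ud' ->]]].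
exists (t + t'), (fun i => u i + u' i); split.
- by rewrite /symmetric_mx linearD /= ts ts'.
- by move=> i j; rewrite mxE; apply: pdeg_leD.
- by move=> i; apply: pdeg_leD.
- by rewrite crossxD gradvD devmD addrACA.
Qed.

Lemma tracefree_decomposable k (A : 'M[P]_3) :
  tracefree_mx A -> mx_deg_le k.+1 A -> decomposable k A.
Proof.
move=> trA dA.
have -> : A = \sum_(d < k.+2) map_mx (pihomog mdeg d) A.
  apply/matrixP => i j; rewrite summxE {1}(pihomog_partitionE (dA i j)).
  by apply: eq_bigr => d _; rewrite mxE.
apply: (big_ind (decomposable k)) => [||d _].
- by apply: (@decomposable_homog _ 0) => // [|i j]; rewrite ?mxtrace0 // mxE rpred0.
- exact: decomposableD.
- apply: (@decomposable_homog _ d) => [||i j]; last by rewrite mxE pihomogP.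
    by rewrite -ltnS ltn_ord.
  have -> : \tr (map_mx (pihomog mdeg d) A) = pihomog mdeg d (\tr A).
    by rewrite [in RHS]/mxtrace raddf_sum; apply: eq_bigr => i _; rewrite mxE.
  by rewrite trA raddf0.
Qed.

End Decomposition.

Theorem lemma3p4 (R : realFieldType) (k : nat) :
  (forall tau : 'M[Poly3 R]_3, symmetric_mx tau -> mx_deg_le k tau ->
     tracefree_mx (crossx tau) /\ mx_deg_le k.+1 (crossx tau))
  /\ (forall u : 'I_3 -> Poly3 R, vec_deg_le k.+2 u ->
     tracefree_mx (devm (gradv u)) /\ mx_deg_le k.+1 (devm (gradv u)))
  /\ (forall A : 'M[Poly3 R]_3, tracefree_mx A -> mx_deg_le k.+1 A ->
     exists tau : 'M[Poly3 R]_3, exists u : 'I_3 -> Poly3 R,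
       [/\ symmetric_mx tau, mx_deg_le k tau, vec_deg_le k.+2 u &
           A = crossx tau + devm (gradv u)])
  /\ (forall (tau : 'M[Poly3 R]_3) (u : 'I_3 -> Poly3 R),
       symmetric_mx tau -> mx_deg_le k tau -> vec_deg_le k.+2 u ->
       crossx tau = devm (gradv u) -> crossx tau = 0).
Proof.
split; first exact: crossx_tracefree.
split; first exact: devgrad_tracefree.
split; first exact: tracefree_decomposable.
move=> tau u _ _ _ crossx_eq; rewrite crossx_eq; apply: devgrad_eq0 => i.
by rewrite -crossx_eq crossx_dotv_x.
Qed.
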